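(* Let $\Sigma$ be a finite simplicial complex, let $d\ge0$, and suppose $\deg\tau>0$ for all $\tau\in\Sigma_d$. Then for every $p\ge1$, $$\frac{h(\Sigma_d)^p}{|\Sigma_{d+1}|^{p-1}}\le\lambda_{I_d}(\Delta^{up}_{d,p})\le\mathrm{vol}(\Sigma_d)^{p-1}\,h(\Sigma_d).$$
   Context: $B_{d+1}$ is the signed $\Sigma_d\times\Sigma_{d+1}$ incidence matrix of $\Sigma$, with entries $\mathrm{sgn}([\tau],\partial[\sigma])$ for $\tau\subset\sigma$ and $0$ otherwise. For $d\ge1$, $B_d$ is the analogous $\Sigma_{d-1}\times\Sigma_d$ matrix; for $d=0$, $B_0^\top:\mathbb{R}\to\mathbb{R}^{\Sigma_0}$ maps to the constant functions. $\deg\tau$ is the number of $(d+1)$-simplices containing $\tau$, and $\mathrm{vol}(\Sigma_d)=\sum_\tau\deg\tau$. We write $\|\mathbf{x}\|_{p,\deg}^p=\sum_\tau\deg\tau\,|x_\tau|^p$, and $I_d=\mathrm{rank}(B_d)+1$. The first nontrivial eigenvalue of the normalized up $p$-Laplacian is $$\lambda_{I_d}(\Delta^{up}_{d,p})=\min_{\mathbf{x}\ne0,\ \mathbf{x}\perp\mathrm{Im}(B_d^\top)}\frac{\|B_{d+1}^\top\mathbf{x}\|_p^p}{\min_{\mathbf{y}\in\mathrm{Im}(B_d^\top)}\|\mathbf{x}+\mathbf{y}\|_{p,\deg}^p},$$ where $\perp$ is standard Euclidean orthogonality. The Cheeger constant is $$h(\Sigma_d)=\inf_{\mathbf{x}\notin\mathrm{Im}(B_d^\top)}\frac{\|B_{d+1}^\top\mathbf{x}\|_1}{\inf_{\mathbf{z}\in\mathrm{Im}(B_d^\top)}\|\mathbf{x}+\mathbf{z}\|_{1,\deg}}.$$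 *)

From HB Require Import structures.
From mathcomp Require Import all_boot all_order all_algebra.
From mathcomp Require Import all_classical all_reals all_analysis.
Set Implicit Arguments. Unset Strict Implicit. Unset Printing Implicit Defensive.
Import Order.TTheory GRing.Theory Num.Theory.
Local Open Scope classical_set_scope.
Local Open Scope ring_scope.

Definition is_simplicial_complex (n : nat) (K : {set {set 'I_n}}) : Prop :=
  forall A B : {set 'I_n}, A \in K -> B \subset A -> B \in K.

Section Complex.
Variables (R : realType) (n : nat) (K : {set {set 'I_n}}).

Definition simplex (k : nat) := {A : {set 'I_n} | (A \in K) && (#|A| == k)}.

Definition Sig (d : nat) := simplex d.+1.

(* sgn([tau], boundary [sigma]) with the orientation induced by the vertex
   order: if sigma = {v_0 < ... < v_k} and tau = sigma \ {v_i} then (-1)^i;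
   0 if tau is not a facet of sigma. *)
Definition sgn (tau sigma : {set 'I_n}) : R :=
  if (tau \subset sigma) && (#|sigma :\: tau| == 1)%N then
    match [pick v in sigma :\: tau] with
    | Some v => (-1) ^+ #|[set u in sigma | (u < v)%N]|
    | None => 0
    end
  else 0.

Definition deg (d : nat) (tau : Sig d) : nat :=
  #|[set sigma : Sig d.+1 | val tau \subset val sigma]|.

Definition vol (d : nat) : R := \sum_(tau : Sig d) (deg tau)%:R.

(* B_{d+1}^T x *)
Definition BT (d : nat) (x : Sig d -> R) : Sig d.+1 -> R :=
  fun sigma => \sum_(tau : Sig d) sgn (val tau) (val sigma) * x tau.

(* Im(B_d^T) as a subset of R^{Sigma_d}; for d = 0 the constant functions *)
Definition imBT (d : nat) : set (Sig d -> R) :=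
  match d return set (Sig d -> R) with
  | 0 => [set x | exists c : R, x = fun _ => c]
  | d'.+1 => [set x | exists w : Sig d' -> R,
                 x = fun tau => \sum_(nu : Sig d') sgn (val nu) (val tau) * w nu]
  end.

Definition pnormp (T : finType) (p : R) (y : T -> R) : R :=
  \sum_(i : T) `|y i| `^ p.

Definition pdegnormp (d : nat) (p : R) (x : Sig d -> R) : R :=
  \sum_(tau : Sig d) (deg tau)%:R * `|x tau| `^ p.

Definition dotv (d : nat) (x y : Sig d -> R) : R := \sum_(tau : Sig d) x tau * y tau.

Definition distp (d : nat) (p : R) (x : Sig d -> R) : R :=
  inf [set pdegnormp p (fun tau => x tau + y tau) | y in @imBT d].

Definition lambda_up (d : nat) (p : R) : R :=
  inf [set r | exists x : Sig d -> R,
         x <> (fun _ => 0) /\ (forall y, @imBT d y -> dotv x y = 0) /\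
         r = pnormp p (BT x) / distp p x].

Definition cheeger (d : nat) : R :=
  inf [set r | exists x : Sig d -> R,
         ~ @imBT d x /\ r = pnormp 1 (BT x) / distp 1 x].

End Complex.

(* Both constants are infima of Rayleigh quotients over the same test vectors.  Shifting
   [x] by an element of Im(B_d^T) changes neither B_{d+1}^T x (as B_{d+1}^T B_d^T = 0) nor
   its distances to Im(B_d^T), and a Gram--Schmidt projection turns every [x] outside
   Im(B_d^T) into a nonzero [x] orthogonal to it.  For such [x], write D = dist_1(x):
   - every |(B_{d+1}^T x)_sigma| is at most D, so ||B_{d+1}^T x||_p^p <= D^(p-1) ||B_{d+1}^T x||_1,
     and Jensen's inequality gives dist_p(x) >= D^p / vol^(p-1); hence the upper bound;
   - deg >= 1 and the superadditivity of t^p give dist_p(x) <= D^p, and Jensen's inequality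
     gives ||B_{d+1}^T x||_1^p <= |Sigma_{d+1}|^(p-1) ||B_{d+1}^T x||_p^p; hence the lower bound. *)

From HB Require Import structures.
From mathcomp Require Import all_boot all_order all_algebra.
From mathcomp Require Import all_classical all_reals all_analysis.
From mathcomp Require Import ring lra.
Set Implicit Arguments. Unset Strict Implicit. Unset Printing Implicit Defensive.
Import Order.TTheory GRing.Theory Num.Theory.
Local Open Scope ring_scope.

Section PowerInequalities.
Variable R : realType.
Implicit Types (p s m a : R).

Lemma powR_bernoulli p s : 1 <= p -> 0 <= s -> 1 + p * (s - 1) <= s `^ p.
Proof.
move=> p1 s0; have [->|pn1] := eqVneq p 1; first by rewrite powRr1 //; lra.
have p0 : 0 < p by lra.
have p10 : 0 < p - 1 by rewrite subr_gt0 lt_neqAle eq_sym pn1.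
have pq : p^-1 + (p / (p - 1))^-1 = 1 by rewrite invf_div; field; lra.
(* Young's inequality [s * 1 <= s^p / p + 1^q / q] for the conjugate exponent [q] *)
have := conjugate_powR s0 ler01 p0 (divr_gt0 p0 p10) pq.
by rewrite invf_div mulr1 powR1 mul1r -mulrDl ler_pdivlMr // => young; lra.
Qed.

Lemma powR_tangent p m a : 1 <= p -> 0 < m -> 0 <= a ->
  m `^ p * (1 + p * (a / m - 1)) <= a `^ p.
Proof.
move=> p1 m0 a0; have am0 : 0 <= a / m by rewrite divr_ge0 // ltW.
rewrite [in leRHS](_ : a = m * (a / m)); last by field; rewrite gt_eqF.
by rewrite powRM ?(ltW m0) // ler_wpM2l ?powR_ge0 ?powR_bernoulli.
Qed.

Variable T : finType.
Implicit Types (w f : T -> R).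

Lemma powR_sum_jensen p w f : 1 <= p -> (forall t, 0 <= w t) -> (forall t, 0 <= f t) ->
  (\sum_t w t * f t) `^ p <= (\sum_t w t) `^ (p - 1) * \sum_t w t * f t `^ p.
Proof.
move=> p1 w0 f0; have p0 : 0 < p by lra.
set S := \sum_t w t * f t; set W := \sum_t w t.
have S0 : 0 <= S by apply: sumr_ge0 => t _; rewrite mulr_ge0.
have [->|S0'] := eqVneq S 0.
  by rewrite powR0 ?gt_eqF // mulr_ge0 ?powR_ge0 ?sumr_ge0 // => t _; rewrite mulr_ge0 ?powR_ge0.
have Wp : 0 < W.
  rewrite lt_neqAle sumr_ge0 // andbT; apply: contra S0' => /eqP/esym W0.
  by rewrite /S big1 // => t _; rewrite (psumr_eq0P _ W0) ?mul0r.
have mean0 : 0 < S / W by rewrite divr_gt0 // lt_neqAle eq_sym S0'.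
(* sum the tangent line of [powR ^~ p] at the weighted mean [S / W] *)
have tangent : \sum_t w t * ((S / W) `^ p * (1 + p * (f t / (S / W) - 1))) = (S / W) `^ p * W.
  transitivity (\sum_t ((S / W) `^ p * (1 - p) * w t + (S / W) `^ p * p / (S / W) * (w t * f t))).
    by apply: eq_bigr => t _; field; rewrite gt_eqF.
  by rewrite big_split -!mulr_sumr -/S -/W /=; field; rewrite S0' gt_eqF.
have le_sum : (S / W) `^ p * W <= \sum_t w t * f t `^ p.
  rewrite -tangent; apply: ler_sum => t _; apply: ler_wpM2l => //.
  exact: powR_tangent.
rewrite {1}(_ : S = W * (S / W)); last by field; rewrite gt_eqF.
rewrite powRM ?(ltW Wp) ?(ltW mean0) // -(mulr_powRB1 (ltW Wp) p0) -mulrA.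
by rewrite mulrCA ler_wpM2l ?powR_ge0 // mulrC.
Qed.

Lemma powR_sum_superadd p w f : 1 <= p -> (forall t, 1 <= w t) -> (forall t, 0 <= f t) ->
  \sum_t w t * f t `^ p <= (\sum_t w t * f t) `^ p.
Proof.
move=> p1 w1 f0; have p0 : 0 < p by lra.
have wf0 t : 0 <= w t * f t by rewrite mulr_ge0 // (le_trans ler01).
set S := \sum_t w t * f t; have S0 : 0 <= S by apply: sumr_ge0.
(* [w t * f t ^ p = (w t * f t) * f t ^ (p - 1) <= (w t * f t) * S ^ (p - 1)] *)
rewrite -(mulr_powRB1 S0 p0) /S mulr_suml; apply: ler_sum => t _.
rewrite -(mulr_powRB1 (f0 t) p0) mulrA ler_wpM2l // ge0_ler_powR ?nnegrE ?subr_ge0 //.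
apply: (le_trans (_ : f t <= w t * f t)); first by rewrite ler_peMl.
by rewrite (bigD1 t) //= lerDl sumr_ge0.
Qed.

End PowerInequalities.

Lemma pnormp1_powR_le (R : realType) (U : finType) (p : R) (v : U -> R) : 1 <= p ->
  pnormp 1 v `^ p <= #|U|%:R `^ (p - 1) * pnormp p v.
Proof.
move=> p1.
have -> : pnormp 1 v = \sum_u 1 * `|v u| by apply: eq_bigr => u _; rewrite powRr1 // mul1r.
have -> : pnormp p v = \sum_u 1 * `|v u| `^ p by apply: eq_bigr => u _; rewrite mul1r.
rewrite -[#|U|%:R]sumr_const; exact: powR_sum_jensen.
Qed.

Section Projection.
Variables (R : realFieldType) (T : finType).
Implicit Types (x y z u v : T -> R).

Definition dot x y : R := \sum_t x t * y t.

Definition lin_span (J : finType) (b : J -> T -> R) : set (T -> R) :=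
  [set y | exists w : J -> R, y = fun t => \sum_j w j * b j t].

Lemma dotC x y : dot x y = dot y x.
Proof. by apply: eq_bigr => t _; rewrite mulrC. Qed.

Lemma dotDl x y z : dot (fun t => x t + y t) z = dot x z + dot y z.
Proof. by rewrite /dot -big_split; apply: eq_bigr => t _; rewrite mulrDl. Qed.

Lemma dotZl c y z : dot (fun t => c * y t) z = c * dot y z.
Proof. by rewrite /dot mulr_sumr; apply: eq_bigr => t _; rewrite mulrA. Qed.

Lemma dot_sumr (J : Type) (s : seq J) (c : J -> R) (g : J -> T -> R) x :
  dot x (fun t => \sum_(i <- s) c i * g i t) = \sum_(i <- s) c i * dot x (g i).
Proof.
rewrite /dot; under eq_bigr do rewrite mulr_sumr.
by rewrite exchange_big; apply: eq_bigr => i _; rewrite mulr_sumr; apply: eq_bigr => t _; ring.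
Qed.

Lemma dot_eq0 x : dot x x = 0 -> x = fun _ => 0.
Proof.
move=> x0; apply: funext => t; apply/eqP; rewrite -sqrf_eq0; apply/eqP.
by apply: (psumr_eq0P _ x0) => // i _; rewrite -expr2 sqr_ge0.
Qed.

Lemma exists_dot_orth u v : exists c, dot (fun t => u t + c * v t) v = 0.
Proof.
have [v0|v0] := eqVneq (dot v v) 0.
  by exists 0; rewrite dotC (dot_eq0 v0) /dot big1 // => t _; rewrite mul0r.
by exists (- dot u v / dot v v); rewrite dotDl dotZl; field.
Qed.

Variable J : finType.
Implicit Type b : J -> T -> R.

(* Gram--Schmidt along [s]: orthogonalize [b a] and [x] against the span of [s],
   then remove from [x] its component along the orthogonalized [b a]. *)
Lemma exists_orth_comb_seq b (s : seq J) x : uniq s -> exists w : J -> R,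
  forall j, j \in s -> dot (fun t => x t + \sum_(i <- s) w i * b i t) (b j) = 0.
Proof.
elim: s x => [x _|a s IH x]; first by exists (fun=> 0).
rewrite cons_uniq => /andP[as_ us].
have [wa orth_ba] := IH (b a) us; have [w1 orth_x] := IH x us.
pose ba t := b a t + \sum_(i <- s) wa i * b i t.
pose x1 t := x t + \sum_(i <- s) w1 i * b i t.
have [c orth_x2] := exists_dot_orth x1 ba.
exists (fun i => if i == a then c else w1 i + c * wa i).
have -> : (fun t => x t + \sum_(i <- a :: s) (if i == a then c else w1 i + c * wa i) * b i t)
    = fun t => x1 t + c * ba t.
  apply: funext => t; rewrite big_cons eqxx /x1 /ba.
  rewrite (eq_big_seq (fun i => w1 i * b i t + c * (wa i * b i t))); last first.
    by move=> i iS; rewrite ifN; [ring | apply: contraNneq as_ => <-].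
  by rewrite big_split /= -mulr_sumr; ring.
have orth_s j : j \in s -> dot (fun t => x1 t + c * ba t) (b j) = 0.
  by move=> js; rewrite dotDl dotZl orth_x // orth_ba // mulr0 addr0.
move=> j; rewrite in_cons => /orP[/eqP->|]; last exact: orth_s.
have -> : b a = fun t => ba t + \sum_(i <- s) (- wa i) * b i t.
  apply: funext => t; rewrite /ba -addrA -big_split big1_seq ?addr0 // => i _.
  by rewrite /= mulNr subrr.
rewrite dotC dotDl [dot ba _]dotC orth_x2 add0r dotC dot_sumr.
by rewrite big1_seq // => i /andP[_ iS]; rewrite orth_s ?mulr0.
Qed.

Lemma exists_orth_lin_span b x :
  exists2 y, lin_span b y & forall z, lin_span b z -> dot (fun t => x t + y t) z = 0.
Proof.
have [w orth] := exists_orth_comb_seq b x (index_enum_uniq J).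
exists (fun t => \sum_j w j * b j t); first by exists w.
move=> _ [w' ->]; rewrite dot_sumr big1 // => j _.
by rewrite orth ?mulr0 // mem_index_enum.
Qed.

Lemma lin_span0 b : lin_span b (fun _ => 0).
Proof. by exists (fun=> 0); apply: funext => t; rewrite big1 // => j _; rewrite mul0r. Qed.

Lemma lin_spanD b y z : lin_span b y -> lin_span b z -> lin_span b (fun t => y t + z t).
Proof.
move=> [wy ->] [wz ->]; exists (fun j => wy j + wz j); apply: funext => t.
by rewrite -big_split; apply: eq_bigr => j _; rewrite mulrDl.
Qed.

Lemma lin_spanN b y : lin_span b y -> lin_span b (fun t => - y t).
Proof.
move=> [w ->]; exists (fun j => - w j); apply: funext => t.
by rewrite -sumrN; apply: eq_bigr => j _; rewrite mulNr.
Qed.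

End Projection.

Section BoundaryOfBoundary.
Variables (R : realType) (n : nat).
Implicit Types (A B nu tau sigma : {set 'I_n}) (u v x : 'I_n).

Lemma sgn_facet A B x : A \subset B -> B :\: A = [set x] ->
  sgn R A B = (-1) ^+ #|[set u in B | (u < x)%N]|.
Proof.
move=> AB BA; rewrite /sgn AB BA cards1 /=.
by case: pickP => [y /set1P -> //|/(_ x)]; rewrite set11.
Qed.

Lemma sgn_setU1 nu x : x \notin nu ->
  sgn R nu (x |: nu) = (-1) ^+ #|[set u in nu | (u < x)%N]|.
Proof.
move=> xnu; rewrite (@sgn_facet _ _ x) ?finset.subsetUr //.
  have -> // : [set u in x |: nu | (u < x)%N] = [set u in nu | (u < x)%N].
  by apply/setP => u; rewrite !inE; case: eqP => [->|]; rewrite ?ltnn ?andbF.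
by apply/setP => u; rewrite !inE; case: eqP => [->|_]; [rewrite xnu | case: (u \in nu)].
Qed.

Lemma sgn_neq0 A B : sgn R A B != 0 -> exists2 x, x \notin A & B = x |: A.
Proof.
rewrite /sgn; case: ifP => [/andP[AB /cards1P[x BA]] _|_]; last by rewrite eqxx.
have : x \in B :\: A by rewrite BA set11.
rewrite inE => /andP[xA _]; exists x => //.
by rewrite -(setID B A) (finset.setIidPr AB) BA finset.setUC.
Qed.

Lemma norm_sgn_le1 A B : `|sgn R A B| <= 1.
Proof.
rewrite /sgn; case: ifP => _; last by rewrite normr0.
by case: pickP => [v _|_]; rewrite ?normr_sign ?normr0.
Qed.

Lemma sgn_set0 tau : #|tau| = 1%N -> sgn R finset.set0 tau = 1.
Proof.
move=> /eqP/cards1P[x ->]; rewrite -[[set x]]finset.setU0 sgn_setU1 ?inE //.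
by rewrite (_ : [set _ in _ | _] = finset.set0) ?cards0 //; apply/setP => u; rewrite !inE.
Qed.

(* The two ways of removing [u < v] from [u |: (v |: nu)] come with opposite signs,
   since [u] shifts the position of [v] by one but not conversely. *)
Lemma sgn_sgn_cancel nu u v : (u < v)%N -> u \notin nu -> v \notin nu ->
  sgn R nu (u |: nu) * sgn R (u |: nu) (u |: (v |: nu)) +
  sgn R nu (v |: nu) * sgn R (v |: nu) (u |: (v |: nu)) = 0.
Proof.
move=> uv unu vnu; rewrite {1}finset.setUCA.
have neq : u != v by apply: contraTneq uv => ->; rewrite ltnn.
have vu : v \notin u |: nu by rewrite !inE negb_or eq_sym neq.
have uv' : u \notin v |: nu by rewrite !inE negb_or neq.
rewrite !sgn_setU1 //.
have -> : [set w in u |: nu | (w < v)%N] = u |: [set w in nu | (w < v)%N].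
  by apply/setP => w; rewrite !inE; case: eqP => [->|].
have -> : [set w in v |: nu | (w < u)%N] = [set w in nu | (w < u)%N].
  by apply/setP => w; rewrite !inE; case: eqP => [->|]; rewrite ?ltnNge ?(ltnW uv) ?andbF.
rewrite cardsU1 inE (negPf unu) add1n exprS; ring.
Qed.

Lemma sgn_mul_neq0 nu tau sigma : sgn R nu tau * sgn R tau sigma != 0 ->
  nu \subset sigma /\ exists2 x, x \in sigma :\: nu & tau = x |: nu.
Proof.
rewrite mulf_eq0 negb_or => /andP[/sgn_neq0[x xnu ->] /sgn_neq0[y _ ->]].
have xs : x \in y |: (x |: nu) by rewrite !inE eqxx orbT.
split; last by exists x; rewrite // inE xnu xs.
by apply/fintype.subsetP => z znu; rewrite !inE znu !orbT.
Qed.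

(* Only the two faces [u |: nu] and [v |: nu] between [nu] and [sigma] contribute. *)
Lemma sum_sgn_sgn (K : {set {set 'I_n}}) (k : nat) nu sigma :
  is_simplicial_complex K -> sigma \in K -> #|nu| = k -> #|sigma| = k.+2 ->
  \sum_(tau : simplex K k.+1) sgn R nu (val tau) * sgn R (val tau) sigma = 0.
Proof.
move=> hK sK cnu csig.
have [nus|nnus] := boolP (nu \subset sigma); last first.
  by apply: big1 => tau _; apply: contraNeq nnus => /sgn_mul_neq0[].
have /cards2P[u [v [neq Duv]]] : #|sigma :\: nu| == 2.
  by rewrite cardsDS // csig cnu -addn2 addKn.
wlog uv : u v neq Duv / (u < v)%N.
  move=> gen; case: (ltngtP u v) => [|vu|/val_inj uv]; first exact: gen.
    by apply: (gen v u); rewrite 1?eq_sym // Duv finset.setUC.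
  by rewrite uv eqxx in neq.
have sigmaE : sigma = u |: (v |: nu).
  by rewrite -(setID sigma nu) (finset.setIidPr nus) Duv finset.setUC -finset.setUA.
have /setDP[_ unu] : u \in sigma :\: nu by rewrite Duv !inE eqxx.
have /setDP[_ vnu] : v \in sigma :\: nu by rewrite Duv !inE eqxx orbT.
have face x : x \in [set u; v] -> (x |: nu \in K) && (#|x |: nu| == k.+1).
  move=> /set2P xuv; rewrite cardsU1 cnu (_ : x \notin nu); last by case: xuv => ->.
  rewrite eqxx andbT (hK _ _ sK) // sigmaE.
  by case: xuv => ->; [apply: finset.setUS; apply: finset.subsetUr | apply: finset.subsetUr].
pose tu : simplex K k.+1 := exist _ (u |: nu) (face u (set21 u v)).
pose tv : simplex K k.+1 := exist _ (v |: nu) (face v (set22 u v)).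
have tvu : tv != tu.
  apply: contra neq => /eqP/(congr1 (fun tau : simplex K k.+1 => u \in val tau)).
  by rewrite /= !inE eqxx (negPf unu) orbF eq_sym => ->.
rewrite (bigD1 tu) // (bigD1 tv) //= big1 ?addr0; first by rewrite sigmaE sgn_sgn_cancel.
move=> tau /andP[ntu ntv]; apply/eqP/negPn/negP => /sgn_mul_neq0[_ [x]].
rewrite Duv => /set2P[]-> tauE.
  by move: ntu; rewrite -(inj_eq val_inj) /= tauE eqxx.
by move: ntv; rewrite -(inj_eq val_inj) /= tauE eqxx.
Qed.

End BoundaryOfBoundary.

Lemma simplex_mem n (K : {set {set 'I_n}}) k (t : simplex K k) : val t \in K.
Proof. by have /andP[] := valP t. Qed.

Lemma card_simplex n (K : {set {set 'I_n}}) k (t : simplex K k) : #|val t| = k.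
Proof. by have /andP[_ /eqP] := valP t. Qed.

Local Open Scope classical_set_scope.

Lemma inf_ge0 (R : realType) (E : set R) : (forall r, E r -> 0 <= r) -> 0 <= inf E.
Proof.
move=> E0; have [->|/set0P[r Er]] := eqVneq E set0; first by rewrite inf0.
by apply: lb_le_inf => [|s /E0]; first by exists r.
Qed.

Lemma ge0_inf_le (R : realType) (E : set R) r : (forall s, E s -> 0 <= s) -> E r -> inf E <= r.
Proof. by move=> E0 Er; apply: ge_inf => //; exists 0 => s /E0. Qed.

Section Rayleigh.
Variables (R : realType) (n : nat) (K : {set {set 'I_n}}) (d : nat).
Local Notation T := (Sig K d).
Implicit Types (x y z : T -> R) (p q : R).

Lemma imBT_lin_span : exists (J : finType) (b : J -> T -> R), @imBT R n K d = lin_span b.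
Proof.
case: d => [|d'] /=.
  exists 'I_1, (fun _ _ => 1); apply/seteqP; split => _ [c ->].
    by exists (fun=> c); apply: funext => t; rewrite big_ord1 mulr1.
  by exists (c ord0); apply: funext => t; rewrite big_ord1 mulr1.
exists (Sig K d'), (fun nu tau => sgn R (val nu) (val tau)).
by apply/seteqP; split => _ [w ->]; exists w; apply: funext => t;
  apply: eq_bigr => nu _; rewrite mulrC.
Qed.

Lemma imBT0 : imBT (fun _ : T => 0 : R).
Proof. by have [J [b ->]] := imBT_lin_span; exact: lin_span0. Qed.

Lemma imBTD y z : imBT y -> imBT z -> imBT (fun t => y t + z t).
Proof. by have [J [b ->]] := imBT_lin_span; exact: lin_spanD. Qed.

Lemma imBTN y : imBT y -> imBT (fun t => - y t).
Proof. by have [J [b ->]] := imBT_lin_span; exact: lin_spanN. Qed.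

Lemma exists_orth_imBT x :
  exists2 y, imBT y & forall z, imBT z -> dotv (fun t => x t + y t) z = 0.
Proof. by have [J [b ->]] := imBT_lin_span; exact: exists_orth_lin_span. Qed.

Hypothesis hK : is_simplicial_complex K.

(* [B_{d+1}^T B_d^T = 0]; for [d = 0], [B_0^T] behaves like [sgn set0 _ = 1]. *)
Lemma BT_imBT y : imBT y -> BT y = fun _ => 0.
Proof.
move=> ihy; apply: funext => sigma; rewrite /BT.
have sK := simplex_mem sigma; have csig := card_simplex sigma.
case: d y ihy sigma sK csig => [|d'] y /= [w ->] sigma sK csig.
  transitivity ((\sum_(tau : Sig K 0) sgn R finset.set0 (val tau) * sgn R (val tau) (val sigma)) * w).
    by rewrite mulr_suml; apply: eq_bigr => tau _; rewrite sgn_set0 ?card_simplex // mul1r.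
  by rewrite (sum_sgn_sgn R hK sK (cards0 _) csig) mul0r.
under eq_bigr do rewrite mulr_sumr.
rewrite exchange_big big1 // => nu _ /=.
transitivity (w nu * \sum_(tau : Sig K d'.+1) sgn R (val nu) (val tau) * sgn R (val tau) (val sigma)).
  by rewrite mulr_sumr; apply: eq_bigr => tau _; ring.
by rewrite (sum_sgn_sgn R hK sK (card_simplex nu) csig) mulr0.
Qed.

Lemma BTD x y : BT (fun t => x t + y t) = fun s => BT x s + BT y s.
Proof. by apply: funext => s; rewrite /BT -big_split; apply: eq_bigr => t _; rewrite mulrDr. Qed.

Lemma BT_shift x y : imBT y -> BT (fun t => x t + y t) = BT x.
Proof. by move=> ihy; rewrite BTD (BT_imBT ihy); apply: funext => s; rewrite addr0. Qed.

Lemma pdegnormp_ge0 q z : 0 <= pdegnormp q z.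
Proof. by apply: sumr_ge0 => t _; rewrite mulr_ge0 ?powR_ge0. Qed.

Lemma pdegnormp1 z : pdegnormp 1 z = \sum_t (deg t)%:R * `|z t|.
Proof. by apply: eq_bigr => t _; rewrite powRr1. Qed.

Lemma distp_ge0 q x : 0 <= distp q x.
Proof. by apply: inf_ge0 => _ [y _ <-]; apply: pdegnormp_ge0. Qed.

Lemma distp_le q x y : imBT y -> distp q x <= pdegnormp q (fun t => x t + y t).
Proof. by move=> ihy; apply: ge0_inf_le; [move=> _ [z _ <-]; apply: pdegnormp_ge0 | exists y]. Qed.

Lemma le_distp q x a :
  (forall y, imBT y -> a <= pdegnormp q (fun t => x t + y t)) -> a <= distp q x.
Proof.
move=> le_a; apply: lb_le_inf => [|_ [y ihy <-]]; last exact: le_a.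
by exists (pdegnormp q (fun t => x t + 0)), (fun=> 0); first exact: imBT0.
Qed.

Lemma distp_shift q x y : imBT y -> distp q (fun t => x t + y t) = distp q x.
Proof.
move=> ihy; rewrite /distp; congr inf; apply/seteqP; split => _ [z ihz <-].
  by exists (fun t => y t + z t); [exact: imBTD | congr pdegnormp; apply: funext => t; rewrite addrA].
exists (fun t => z t - y t); first by apply: imBTD => //; exact: imBTN.
by congr pdegnormp; apply: funext => t; ring.
Qed.

Definition admissible x := x <> (fun _ => 0) /\ forall y, imBT y -> dotv x y = 0.

Lemma admissible_notin_imBT x : admissible x -> ~ imBT x.
Proof. by move=> [x0 orth] ihx; apply/x0/dot_eq0/orth. Qed.

Lemma exists_admissible_shift x :
  ~ imBT x -> exists2 y, imBT y & admissible (fun t => x t + y t).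
Proof.
move=> nihx; have [y ihy orth] := exists_orth_imBT x; exists y => //; split => // xy0.
apply/nihx; rewrite (_ : x = fun t => - y t); first exact: imBTN.
by apply: funext => t; apply/eqP; rewrite -addr_eq0 (congr1 (@^~ t) xy0).
Qed.

Definition rayleigh q x := pnormp q (BT x) / distp q x.

Lemma rayleigh_ge0 q x : 0 <= rayleigh q x.
Proof. by rewrite divr_ge0 ?distp_ge0 ?sumr_ge0 // => s _; rewrite powR_ge0. Qed.

Lemma inf_rayleigh_le q x : admissible x ->
  inf [set rayleigh q z | z in admissible] <= rayleigh q x.
Proof. by move=> adx; apply: ge0_inf_le; [move=> _ [z _ <-]; apply: rayleigh_ge0 | exists x]. Qed.

Lemma lambda_upE p : lambda_up K d p = inf [set rayleigh p x | x in admissible].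
Proof.
by congr inf; apply/seteqP; split => [_ [x [x0 [orth ->]]]|_ [x [x0 orth] <-]]; exists x.
Qed.

Lemma cheegerE : cheeger R K d = inf [set rayleigh 1 x | x in admissible].
Proof.
congr inf; apply/seteqP; split => [_ [x [nihx ->]]|_ [x adx <-]]; last first.
  by exists x; split => //; exact: admissible_notin_imBT.
have [y ihy adxy] := exists_admissible_shift nihx; exists (fun t => x t + y t) => //.
by rewrite /rayleigh BT_shift // distp_shift.
Qed.

Hypothesis hdeg : forall tau : T, (0 < deg tau)%N.

Lemma deg_ge1 (t : T) : 1 <= (deg t)%:R :> R.
Proof. by rewrite ler1n hdeg. Qed.

Lemma vol_gt0 (t : T) : 0 < vol R K d.
Proof.
rewrite /vol (bigD1 t) //= ltr_pwDl ?sumr_ge0 //.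
exact: lt_le_trans ltr01 (deg_ge1 t).
Qed.

Lemma admissible_vol_gt0 x : admissible x -> 0 < vol R K d.
Proof.
case=> x0 _; have [t _|T0] := pickP (fun t : T => true); first exact: vol_gt0 t.
by case: x0; apply: funext => t; have := T0 t.
Qed.

Lemma distp1_gt0 x : admissible x -> 0 < distp 1 x.
Proof.
move=> [x0 orth]; have [t0 /eqP xt0] : exists t, x t <> 0.
  by apply/existsNP => x_0; apply: x0; apply: funext.
have normx_gt0 : 0 < \sum_t `|x t| by rewrite (bigD1 t0) //= ltr_pwDl ?normr_gt0 ?sumr_ge0.
have dotx_gt0 : 0 < dotv x x.
  rewrite /dotv (bigD1 t0) //= ltr_pwDl ?sumr_ge0 //; last by move=> t _; rewrite -expr2 sqr_ge0.
  by rewrite -expr2 exprn_even_gt0.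
apply: lt_le_trans (_ : dotv x x / \sum_t `|x t| <= _); first by rewrite divr_gt0.
apply: le_distp => y ihy; rewrite ler_pdivrMr // pdegnormp1.
(* [<x, x> = <x, x + y> <= sum |x_t| |x_t + y_t| <= (sum |x_t|) * sum deg_t |x_t + y_t|] *)
have -> : dotv x x = dot x (fun t => x t + y t).
  by rewrite dotC dotDl [dot y x]dotC (orth y ihy : dot x y = 0) addr0.
rewrite mulrC mulr_suml; apply: ler_sum => t _.
apply: le_trans (ler_norm _) _; rewrite normrM ler_wpM2l //.
apply: le_trans (_ : (deg t)%:R * `|x t + y t| <= _); first by rewrite ler_peMl ?deg_ge1.
by rewrite (bigD1 t) //= lerDl sumr_ge0.
Qed.

Lemma normBT_le_distp1 x s : `|BT x s| <= distp 1 x.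
Proof.
apply: le_distp => y ihy; rewrite -(BT_shift x ihy) pdegnormp1.
apply: le_trans (ler_norm_sum _ _ _) _; apply: ler_sum => t _.
by rewrite normrM ler_wpM2r // (le_trans (norm_sgn_le1 _ _ _)) ?deg_ge1.
Qed.

Lemma pnormp_BT_le p x : 1 <= p ->
  pnormp p (BT x) <= distp 1 x `^ (p - 1) * pnormp 1 (BT x).
Proof.
move=> p1; rewrite mulr_sumr; apply: ler_sum => s _.
rewrite powRr1 // -(mulr_powRB1 (normr_ge0 _) (_ : 0 < p)) 1?mulrC; last by lra.
by rewrite ler_wpM2r // ge0_ler_powR ?nnegrE ?subr_ge0 ?distp_ge0 ?normBT_le_distp1.
Qed.

Lemma distp1_powR_le p x : 1 <= p -> 0 < vol R K d ->
  distp 1 x `^ p / vol R K d `^ (p - 1) <= distp p x.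
Proof.
move=> p1 vol0; apply: le_distp => y ihy; rewrite ler_pdivrMr ?powR_gt0 //.
apply: le_trans (_ : pdegnormp 1 (fun t => x t + y t) `^ p <= _).
  by rewrite ge0_ler_powR ?nnegrE ?distp_ge0 ?pdegnormp_ge0 ?distp_le //; lra.
by rewrite pdegnormp1 mulrC powR_sum_jensen // => t; rewrite ?normr_ge0.
Qed.

(* Taking [p]-th roots turns the bound [distp p x <= |x + y|_{1,deg}^p] for every [y]
   into a lower bound for the infimum [distp 1 x]. *)
Lemma distp_le_powR p x : 1 <= p -> distp p x <= distp 1 x `^ p.
Proof.
move=> p1; have p0 : 0 < p by lra.
have rootK a : 0 <= a -> (a `^ p) `^ p^-1 = a by move=> a0; rewrite -powRrM mulfV ?gt_eqF ?powRr1.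
have root_le : distp p x `^ p^-1 <= distp 1 x.
  apply: le_distp => y ihy; rewrite -[leRHS]rootK ?pdegnormp_ge0 //.
  rewrite ge0_ler_powR ?nnegrE ?invr_ge0 ?powR_ge0 ?distp_ge0 ?(ltW p0) //.
  rewrite (le_trans (distp_le p x ihy)) // pdegnormp1 powR_sum_superadd //.
  exact: deg_ge1.
rewrite -[leLHS](rootK _ (distp_ge0 p x)) powRAC.
by rewrite ge0_ler_powR ?nnegrE ?powR_ge0 ?distp_ge0 ?(ltW p0).
Qed.

Lemma distp_gt0 p x : 1 <= p -> admissible x -> 0 < distp p x.
Proof.
move=> p1 adx; have V0 := admissible_vol_gt0 adx.
apply: lt_le_trans (distp1_powR_le x p1 V0).
by rewrite divr_gt0 ?powR_gt0 ?distp1_gt0.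
Qed.

Lemma rayleigh_le_vol p x : 1 <= p -> admissible x ->
  rayleigh p x <= vol R K d `^ (p - 1) * rayleigh 1 x.
Proof.
move=> p1 adx; have p0 : 0 < p by lra.
have D0 := distp1_gt0 adx; set D := distp 1 x.
have V'0 : 0 < vol R K d `^ (p - 1) by rewrite powR_gt0 ?(admissible_vol_gt0 adx).
have Dp0 := distp_gt0 p1 adx.
rewrite /rayleigh ler_pdivrMr // (le_trans (pnormp_BT_le x p1)) // -/D.
set B1 := pnormp 1 _; set V' := vol R K d `^ _.
have B0 : 0 <= B1 by apply: sumr_ge0 => s _; rewrite powR_ge0.
have -> : D `^ (p - 1) * B1 = V' * (B1 / D) * (D `^ p / V').
  by rewrite -(mulr_powRB1 (ltW D0) p0); field; rewrite !gt_eqF.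
by rewrite ler_wpM2l ?distp1_powR_le ?(admissible_vol_gt0 adx) // mulr_ge0 ?divr_ge0 // ltW.
Qed.

Lemma rayleigh1_powR_le p x : 1 <= p -> admissible x ->
  rayleigh 1 x `^ p / #|{: Sig K d.+1}|%:R `^ (p - 1) <= rayleigh p x.
Proof.
move=> p1 adx; have D0 := distp1_gt0 adx; have Dp0 := distp_gt0 p1 adx.
have := powR_ge0 #|{: Sig K d.+1}|%:R (p - 1); rewrite le_eqVlt => /predU1P[<-|N0].
  by rewrite invr0 mulr0 rayleigh_ge0.
rewrite ler_pdivrMr // /rayleigh [_ / distp p x * _]mulrAC ler_pdivlMr //.
apply: le_trans (_ : (pnormp 1 (BT x) / distp 1 x) `^ p * distp 1 x `^ p <= _).
  by rewrite ler_wpM2l ?powR_ge0 ?distp_le_powR.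
have B0 : 0 <= pnormp 1 (BT x) by apply: sumr_ge0 => s _; rewrite powR_ge0.
by rewrite -powRM ?divr_ge0 ?distp_ge0 // divfK ?gt_eqF // mulrC pnormp1_powR_le.
Qed.

End Rayleigh.


Theorem proposition3p2 (R : realType) (n : nat) (K : {set {set 'I_n}})
  (hK : is_simplicial_complex K) (d : nat)
  (hdeg : forall tau : Sig K d, (0 < deg tau)%N) (p : R) (hp : 1 <= p) :
  (cheeger R K d) `^ p / (#|{: Sig K d.+1}|%:R) `^ (p - 1) <= lambda_up K d p
  /\ lambda_up K d p <= (vol R K d) `^ (p - 1) * cheeger R K d.
Proof.
rewrite cheegerE // lambda_upE.
have [A0|/set0P[x adx]] := eqVneq (@admissible R n K d) set0.
  by rewrite A0 !image_set0 inf0 powR0 ?mul0r ?mulr0; last lra.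
have h0 : 0 <= inf [set rayleigh 1 z | z in @admissible R n K d].
  by apply: inf_ge0 => _ [z _ <-]; apply: rayleigh_ge0.
have V0 : 0 < vol R K d `^ (p - 1) by rewrite powR_gt0 ?(admissible_vol_gt0 hdeg adx).
split.
  apply: lb_le_inf => [|_ [z adz <-]]; first by exists (rayleigh p x), x.
  apply: le_trans (rayleigh1_powR_le hdeg hp adz).
  rewrite ler_wpM2r ?invr_ge0 ?powR_ge0 // ge0_ler_powR ?nnegrE ?rayleigh_ge0 ?inf_rayleigh_le //.
  lra.
rewrite mulrC -ler_pdivrMr //; apply: lb_le_inf => [|_ [z adz <-]]; first by exists (rayleigh 1 x), x.
rewrite ler_pdivrMr // mulrC.
exact: le_trans (inf_rayleigh_le p adz) (rayleigh_le_vol hK hdeg hp adz).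
Qed.
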